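(* Let $p\geq 5$ be an odd integer and $s=\frac2p$. For any even integer $n\geq 4$, \[ 2\left(n-\tfrac12\right)^s=2\left(n^2-n+\tfrac14\right)^{s/2}<A_{n,s}^{-1}<2\left(n^2-n+\tfrac34\right)^{s/2}, \] and for any odd integer $n\geq 3$, \[ -2\left(n^2-n+\tfrac34\right)^{s/2}<B_{n,s}^{-1}<-2\left(n^2-n+\tfrac14\right)^{s/2}=-2\left(n-\tfrac12\right)^s. \]
   Context: For an integer $n\geq1$ and real $0<s<1$: $A_{n,s}=\left(\frac{1}{n^s}-\frac{1}{(n+1)^s}\right)+\left(\frac{1}{(n+2)^s}-\frac{1}{(n+3)^s}\right)+\cdots$ and $B_{n,s}=\left(-\frac{1}{n^s}+\frac{1}{(n+1)^s}\right)+\left(-\frac{1}{(n+2)^s}+\frac{1}{(n+3)^s}\right)+\cdots$. *)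

From Stdlib Require Import Reals.
From Coquelicot Require Export Coquelicot.
Open Scope R_scope.

Definition rpow (x s : R) : R := Rpower x s.

(* A_{n,s} = sum_{k>=0} ( 1/(n+2k)^s - 1/(n+2k+1)^s ), grouped in pairs *)
Definition A_ns (n : nat) (s : R) : R :=
  Series (fun k : nat => / rpow (INR (n + 2 * k)) s - / rpow (INR (n + 2 * k + 1)) s).

(* B_{n,s} = sum_{k>=0} ( -1/(n+2k)^s + 1/(n+2k+1)^s ), grouped in pairs *)
Definition B_ns (n : nat) (s : R) : R :=
  Series (fun k : nat => - / rpow (INR (n + 2 * k)) s + / rpow (INR (n + 2 * k + 1)) s).

From Stdlib Require Import Reals Lra Lia.
From Coquelicot Require Import Coquelicot.
Open Scope R_scope.

(* With f t = t^(-s), A_ns n s is the sum of the drops f (c - 1/2) - f (c + 1/2) over the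
   centres c = n + 2k + 1/2.  For 0 < s <= 2/5 and c >= 7/2 each drop lies strictly between
   half the drops of t |-> (t^2 + 1/2)^(-s/2) and of f from c - 1 to c + 1; both of these
   telescope along the centres, which bounds A_ns, and B_ns = - A_ns.  Scaling by c with
   u = 1/c <= 2/7 turns the two comparisons into inequalities between sym_diff s at u and at
   u/2 (with a second-order correction for the lower one).  As sym_diff and sym_sum are, up to
   the factor a, each other's derivatives with a shifted to a + 1, integrating from 0 again and
   again yields Taylor-type lower bounds on [0,1) and, starting from sym_sum <= 9, upper bounds
   on [0,2/7], precise enough for both inequalities. *)

Lemma Rpower_1_l y : Rpower 1 y = 1.
Proof. unfold Rpower; rewrite ln_1, Rmult_0_r; apply exp_0. Qed.

Lemma Rpower_pos x y : 0 < Rpower x y.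
Proof. apply exp_pos. Qed.

Lemma Rpower_pow2_half y s : 0 < y -> Rpower (y ^ 2) (s / 2) = Rpower y s.
Proof.
  intros Hy. rewrite <- (Rpower_pow 2 y), Rpower_mult by exact Hy.
  f_equal; simpl; field.
Qed.

Lemma Rinv_Rpower_mult c y s : 0 < c -> 0 < y -> / Rpower (c * y) s = / Rpower c s * Rpower y (- s).
Proof.
  intros Hc Hy. rewrite <- Rpower_mult_distr, Rinv_mult, Rpower_Ropp by assumption.
  reflexivity.
Qed.

Lemma Rpower_opp_add_INR y a k : 0 < y -> Rpower y (- (a + INR k)) = Rpower y (- a) / y ^ k.
Proof.
  intros Hy. replace (- (a + INR k)) with (- a + - INR k) by ring.
  rewrite Rpower_plus, (Rpower_Ropp y (INR k)), Rpower_pow by exact Hy.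
  reflexivity.
Qed.

Lemma Rpower_opp_le_1 x a : 1 <= x -> 0 <= a -> Rpower x (- a) <= 1.
Proof.
  intros Hx Ha. rewrite <- (Rpower_O x) by lra.
  apply Rle_Rpower; lra.
Qed.

Lemma Rinv_Rpower_lt x y s : 0 < s -> 0 < x < y -> / Rpower y s < / Rpower x s.
Proof.
  intros Hs Hxy. apply Rinv_lt_contravar.
  - apply Rmult_lt_0_compat; apply Rpower_pos.
  - apply Rlt_Rpower_l; lra.
Qed.

Lemma Rpower_opp_Rinv x a : 0 < x -> Rpower x (- a) = Rpower (/ x) a.
Proof. intros Hx. unfold Rpower. rewrite ln_Rinv by exact Hx. f_equal; ring. Qed.

Lemma Rpower_1_sub_opp_le_8 x a : 0 <= x <= 2/7 -> 0 <= a <= 6 -> Rpower (1 - x) (- a) <= 8.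
Proof.
  intros Hx Ha. rewrite Rpower_opp_Rinv by lra.
  apply Rle_trans with (Rpower (7/5) (INR 6)).
  - apply Rle_trans with (Rpower (7/5) a).
    + apply Rle_Rpower_l; [lra|]. split; [apply Rinv_0_lt_compat; lra|].
      replace (7/5) with (/ (5/7)) by field. apply Rinv_le_contravar; lra.
    + apply Rle_Rpower; simpl; lra.
  - rewrite Rpower_pow by lra. simpl; lra.
Qed.

Lemma increment_le_of_derive_le (F dF P dP : R -> R) x0 : 0 <= x0 ->
  (forall x, 0 <= x <= x0 -> is_derive F x (dF x)) ->
  (forall x, 0 <= x <= x0 -> is_derive P x (dP x)) ->
  (forall x, 0 <= x <= x0 -> dP x <= dF x) ->
  P x0 - P 0 <= F x0 - F 0.
Proof.
  intros Hx0 HF HP Hle.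
  destruct (Req_dec x0 0) as [->|Hne]; [lra|].
  destruct (MVT_cor2 (fun x => F x - P x) (fun x => dF x - dP x) 0 x0) as [c [Hc Hc0]];
    [lra| |].
  - intros c Hc. apply is_derive_Reals, (is_derive_minus F P); auto.
  - specialize (Hle c ltac:(lra)).
    assert (0 <= (dF c - dP c) * (x0 - 0)) by (apply Rmult_le_pos; lra).
    lra.
Qed.

Lemma is_derive_Rpower_1_sub_opp a x : x < 1 ->
  is_derive (fun y => Rpower (1 - y) (- a)) x (a * Rpower (1 - x) (- (a + 1))).
Proof.
  intros Hx.
  replace (a * Rpower (1 - x) (- (a + 1))) with (scal (-1) (- a * Rpower (1 - x) (- a - 1)))
    by (unfold scal; simpl; unfold mult; simpl; replace (- a - 1) with (- (a + 1)) by ring; ring).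
  apply (is_derive_comp (fun y => Rpower y (- a)) (fun y => 1 - y)).
  - apply is_derive_Reals, derivable_pt_lim_power; lra.
  - auto_derive; auto; ring.
Qed.

Lemma is_derive_Rpower_1_add_opp a x : -1 < x ->
  is_derive (fun y => Rpower (1 + y) (- a)) x (- a * Rpower (1 + x) (- (a + 1))).
Proof.
  intros Hx.
  replace (- a * Rpower (1 + x) (- (a + 1))) with (scal 1 (- a * Rpower (1 + x) (- a - 1)))
    by (unfold scal; simpl; unfold mult; simpl; replace (- a - 1) with (- (a + 1)) by ring; ring).
  apply (is_derive_comp (fun y => Rpower y (- a)) (fun y => 1 + y)).
  - apply is_derive_Reals, derivable_pt_lim_power; lra.
  - auto_derive; auto; ring.
Qed.

Definition sym_diff a x := Rpower (1 - x) (- a) - Rpower (1 + x) (- a).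
Definition sym_sum a x := Rpower (1 - x) (- a) + Rpower (1 + x) (- a).

Lemma is_derive_sym_diff a x : -1 < x < 1 -> is_derive (sym_diff a) x (a * sym_sum (a + 1) x).
Proof.
  intros Hx. unfold sym_diff, sym_sum.
  replace (a * (Rpower (1 - x) (- (a + 1)) + Rpower (1 + x) (- (a + 1))))
    with (minus (a * Rpower (1 - x) (- (a + 1))) (- a * Rpower (1 + x) (- (a + 1))))
    by (unfold minus, plus, opp; simpl; ring).
  apply (is_derive_minus (fun y => Rpower (1 - y) (- a)) (fun y => Rpower (1 + y) (- a))).
  - apply is_derive_Rpower_1_sub_opp; lra.
  - apply is_derive_Rpower_1_add_opp; lra.
Qed.

Lemma is_derive_sym_sum a x : -1 < x < 1 -> is_derive (sym_sum a) x (a * sym_diff (a + 1) x).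
Proof.
  intros Hx. unfold sym_diff, sym_sum.
  replace (a * (Rpower (1 - x) (- (a + 1)) - Rpower (1 + x) (- (a + 1))))
    with (plus (a * Rpower (1 - x) (- (a + 1))) (- a * Rpower (1 + x) (- (a + 1))))
    by (unfold plus; simpl; ring).
  apply (is_derive_plus (fun y => Rpower (1 - y) (- a)) (fun y => Rpower (1 + y) (- a))).
  - apply is_derive_Rpower_1_sub_opp; lra.
  - apply is_derive_Rpower_1_add_opp; lra.
Qed.

Lemma sym_diff_0 a : sym_diff a 0 = 0.
Proof. unfold sym_diff. rewrite Rminus_0_r, Rplus_0_r. ring. Qed.

Lemma sym_sum_0 a : sym_sum a 0 = 2.
Proof. unfold sym_sum. rewrite Rminus_0_r, Rplus_0_r, Rpower_1_l. ring. Qed.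

Lemma sym_diff_ge_0 a x : 0 <= a -> 0 <= x < 1 -> 0 <= sym_diff a x.
Proof.
  intros Ha Hx. unfold sym_diff. rewrite !Rpower_Ropp.
  assert (Rpower (1 - x) a <= Rpower (1 + x) a) by (apply Rle_Rpower_l; lra).
  assert (/ Rpower (1 + x) a <= / Rpower (1 - x) a)
    by (apply Rinv_le_contravar; [apply Rpower_pos | lra]).
  lra.
Qed.

Lemma sym_sum_ge_2 a x : 0 <= a -> 0 <= x < 1 -> 2 <= sym_sum a x.
Proof.
  intros Ha Hx.
  assert (H : 2 - 2 <= sym_sum a x - sym_sum a 0).
  { apply (increment_le_of_derive_le (sym_sum a) (fun y => a * sym_diff (a + 1) y)
      (fun _ => 2) (fun _ => 0)); [lra | | |]; intros y Hy.
    - apply is_derive_sym_sum; lra.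
    - auto_derive; auto.
    - apply Rmult_le_pos; [lra|]. apply sym_diff_ge_0; lra. }
  rewrite sym_sum_0 in H. lra.
Qed.

Lemma sym_diff_ge_linear a x : 0 <= a -> 0 <= x < 1 -> 2 * a * x <= sym_diff a x.
Proof.
  intros Ha Hx.
  assert (H : 2 * a * x - 2 * a * 0 <= sym_diff a x - sym_diff a 0).
  { apply (increment_le_of_derive_le (sym_diff a) (fun y => a * sym_sum (a + 1) y)
      (fun y => 2 * a * y) (fun _ => 2 * a)); [lra | | |]; intros y Hy.
    - apply is_derive_sym_diff; lra.
    - auto_derive; auto; ring.
    - assert (2 <= sym_sum (a + 1) y) by (apply sym_sum_ge_2; lra). nra. }
  rewrite sym_diff_0 in H. lra.
Qed.

Lemma sym_sum_ge_quadratic a x : 0 <= a -> 0 <= x < 1 ->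
  2 + a * (a + 1) * x ^ 2 <= sym_sum a x.
Proof.
  intros Ha Hx.
  assert (H : (2 + a * (a + 1) * x ^ 2) - (2 + a * (a + 1) * 0 ^ 2) <= sym_sum a x - sym_sum a 0).
  { apply (increment_le_of_derive_le (sym_sum a) (fun y => a * sym_diff (a + 1) y)
      (fun y => 2 + a * (a + 1) * y ^ 2) (fun y => a * (2 * (a + 1) * y))); [lra | | |];
      intros y Hy.
    - apply is_derive_sym_sum; lra.
    - auto_derive; auto; ring.
    - apply Rmult_le_compat_l; [lra|]. apply sym_diff_ge_linear; lra. }
  rewrite sym_sum_0 in H. lra.
Qed.

Lemma sym_diff_ge_cubic a x : 0 <= a -> 0 <= x < 1 ->
  2 * a * x + a * (a + 1) * (a + 2) * x ^ 3 / 3 <= sym_diff a x.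
Proof.
  intros Ha Hx.
  assert (H : (2 * a * x + a * (a + 1) * (a + 2) * x ^ 3 / 3)
              - (2 * a * 0 + a * (a + 1) * (a + 2) * 0 ^ 3 / 3) <= sym_diff a x - sym_diff a 0).
  { apply (increment_le_of_derive_le (sym_diff a) (fun y => a * sym_sum (a + 1) y)
      (fun y => 2 * a * y + a * (a + 1) * (a + 2) * y ^ 3 / 3)
      (fun y => a * (2 + (a + 1) * (a + 1 + 1) * y ^ 2))); [lra | | |]; intros y Hy.
    - apply is_derive_sym_diff; lra.
    - auto_derive; auto; field.
    - apply Rmult_le_compat_l; [lra|]. apply sym_sum_ge_quadratic; lra. }
  rewrite sym_diff_0 in H. lra.
Qed.

Lemma sym_sum_le_9 a x : 0 <= a <= 6 -> 0 <= x <= 2/7 -> sym_sum a x <= 9.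
Proof.
  intros Ha Hx. unfold sym_sum.
  assert (Rpower (1 - x) (- a) <= 8) by (apply Rpower_1_sub_opp_le_8; lra).
  assert (Rpower (1 + x) (- a) <= 1) by (apply Rpower_opp_le_1; lra).
  lra.
Qed.

Lemma sym_diff_le_linear a x : 0 <= a <= 5 -> 0 <= x <= 2/7 -> sym_diff a x <= 9 * a * x.
Proof.
  intros Ha Hx.
  assert (H : sym_diff a x - sym_diff a 0 <= 9 * a * x - 9 * a * 0).
  { apply (increment_le_of_derive_le (fun y => 9 * a * y) (fun _ => 9 * a)
      (sym_diff a) (fun y => a * sym_sum (a + 1) y)); [lra | | |]; intros y Hy.
    - auto_derive; auto; ring.
    - apply is_derive_sym_diff; lra.
    - assert (sym_sum (a + 1) y <= 9) by (apply sym_sum_le_9; lra). nra. }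
  rewrite sym_diff_0 in H. lra.
Qed.

Lemma sym_sum_le_quadratic a x : 0 <= a <= 4 -> 0 <= x <= 2/7 ->
  sym_sum a x <= 2 + 9 * a * (a + 1) * x ^ 2 / 2.
Proof.
  intros Ha Hx.
  assert (H : sym_sum a x - sym_sum a 0
              <= (2 + 9 * a * (a + 1) * x ^ 2 / 2) - (2 + 9 * a * (a + 1) * 0 ^ 2 / 2)).
  { apply (increment_le_of_derive_le (fun y => 2 + 9 * a * (a + 1) * y ^ 2 / 2)
      (fun y => a * (9 * (a + 1) * y)) (sym_sum a) (fun y => a * sym_diff (a + 1) y));
      [lra | | |]; intros y Hy.
    - auto_derive; auto; field.
    - apply is_derive_sym_sum; lra.
    - apply Rmult_le_compat_l; [lra|]. apply sym_diff_le_linear; lra. }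
  rewrite sym_sum_0 in H. lra.
Qed.

Lemma sym_diff_le_cubic a x : 0 <= a <= 3 -> 0 <= x <= 2/7 ->
  sym_diff a x <= 2 * a * x + 9 * a * (a + 1) * (a + 2) * x ^ 3 / 6.
Proof.
  intros Ha Hx.
  assert (H : sym_diff a x - sym_diff a 0
              <= (2 * a * x + 9 * a * (a + 1) * (a + 2) * x ^ 3 / 6)
                 - (2 * a * 0 + 9 * a * (a + 1) * (a + 2) * 0 ^ 3 / 6)).
  { apply (increment_le_of_derive_le (fun y => 2 * a * y + 9 * a * (a + 1) * (a + 2) * y ^ 3 / 6)
      (fun y => a * (2 + 9 * (a + 1) * (a + 1 + 1) * y ^ 2 / 2))
      (sym_diff a) (fun y => a * sym_sum (a + 1) y)); [lra | | |]; intros y Hy.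
    - auto_derive; auto; field.
    - apply is_derive_sym_diff; lra.
    - apply Rmult_le_compat_l; [lra|]. apply sym_sum_le_quadratic; lra. }
  rewrite sym_diff_0 in H. lra.
Qed.

Lemma sym_sum_le_quartic a x : 0 <= a <= 2 -> 0 <= x <= 2/7 ->
  sym_sum a x <= 2 + a * (a + 1) * x ^ 2 + 9 * a * (a + 1) * (a + 2) * (a + 3) * x ^ 4 / 24.
Proof.
  intros Ha Hx.
  assert (H : sym_sum a x - sym_sum a 0
              <= (2 + a * (a + 1) * x ^ 2 + 9 * a * (a + 1) * (a + 2) * (a + 3) * x ^ 4 / 24)
                 - (2 + a * (a + 1) * 0 ^ 2 + 9 * a * (a + 1) * (a + 2) * (a + 3) * 0 ^ 4 / 24)).
  { apply (increment_le_of_derive_le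
      (fun y => 2 + a * (a + 1) * y ^ 2 + 9 * a * (a + 1) * (a + 2) * (a + 3) * y ^ 4 / 24)
      (fun y => a * (2 * (a + 1) * y + 9 * (a + 1) * (a + 1 + 1) * (a + 1 + 2) * y ^ 3 / 6))
      (sym_sum a) (fun y => a * sym_diff (a + 1) y)); [lra | | |]; intros y Hy.
    - auto_derive; auto; field.
    - apply is_derive_sym_sum; lra.
    - apply Rmult_le_compat_l; [lra|]. apply sym_diff_le_cubic; lra. }
  rewrite sym_sum_0 in H. lra.
Qed.

Lemma sym_diff_le_quintic a x : 0 <= a <= 1 -> 0 <= x <= 2/7 ->
  sym_diff a x <= 2 * a * x + a * (a + 1) * (a + 2) * x ^ 3 / 3
                  + 9 * a * (a + 1) * (a + 2) * (a + 3) * (a + 4) * x ^ 5 / 120.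
Proof.
  intros Ha Hx.
  set (T := fun y => 2 * a * y + a * (a + 1) * (a + 2) * y ^ 3 / 3
                     + 9 * a * (a + 1) * (a + 2) * (a + 3) * (a + 4) * y ^ 5 / 120).
  assert (H : sym_diff a x - sym_diff a 0 <= T x - T 0).
  { apply (increment_le_of_derive_le T
      (fun y => a * (2 + (a + 1) * (a + 1 + 1) * y ^ 2
                     + 9 * (a + 1) * (a + 1 + 1) * (a + 1 + 2) * (a + 1 + 3) * y ^ 4 / 24))
      (sym_diff a) (fun y => a * sym_sum (a + 1) y)); [lra | | |]; intros y Hy.
    - unfold T. auto_derive; auto; field.
    - apply is_derive_sym_diff; lra.
    - apply Rmult_le_compat_l; [lra|]. apply sym_sum_le_quartic; lra. }
  rewrite sym_diff_0 in H. unfold T in H. lra.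
Qed.

Lemma Rpower_1_add_opp_ge_linear r x : 0 <= r -> 0 <= x -> 1 - r * x <= Rpower (1 + x) (- r).
Proof.
  intros Hr Hx.
  assert (H : (1 - r * x) - (1 - r * 0) <= Rpower (1 + x) (- r) - Rpower (1 + 0) (- r)).
  { apply (increment_le_of_derive_le (fun y => Rpower (1 + y) (- r))
      (fun y => - r * Rpower (1 + y) (- (r + 1))) (fun y => 1 - r * y) (fun _ => - r));
      [lra | | |]; intros y Hy.
    - apply is_derive_Rpower_1_add_opp; lra.
    - auto_derive; auto; ring.
    - assert (Rpower (1 + y) (- (r + 1)) <= 1) by (apply Rpower_opp_le_1; lra). nra. }
  rewrite Rplus_0_r, Rpower_1_l in H. lra.
Qed.

Lemma Rpower_1_add_opp_le_quadratic r x : 0 <= r -> 0 <= x ->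
  Rpower (1 + x) (- r) <= 1 - r * x + r * (r + 1) * x ^ 2 / 2.
Proof.
  intros Hr Hx.
  assert (H : Rpower (1 + x) (- r) - Rpower (1 + 0) (- r)
              <= (1 - r * x + r * (r + 1) * x ^ 2 / 2) - (1 - r * 0 + r * (r + 1) * 0 ^ 2 / 2)).
  { apply (increment_le_of_derive_le (fun y => 1 - r * y + r * (r + 1) * y ^ 2 / 2)
      (fun y => - r + r * (r + 1) * y) (fun y => Rpower (1 + y) (- r))
      (fun y => - r * Rpower (1 + y) (- (r + 1)))); [lra | | |]; intros y Hy.
    - auto_derive; auto; field.
    - apply is_derive_Rpower_1_add_opp; lra.
    - assert (1 - (r + 1) * y <= Rpower (1 + y) (- (r + 1)))
        by (apply Rpower_1_add_opp_ge_linear; lra).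
      nra. }
  rewrite Rplus_0_r, Rpower_1_l in H. lra.
Qed.

Lemma sym_diff_half_lt s u : 0 < s <= 2/5 -> 0 < u <= 2/7 -> 2 * sym_diff s (u / 2) < sym_diff s u.
Proof.
  intros Hs Hu.
  assert (Hu2 : u ^ 2 <= 4/49) by nra.
  assert (Hgap : 0 < u ^ 3 / 4 - 9 * (s + 3) * (s + 4) * u ^ 5 / 1920).
  { replace (u ^ 3 / 4 - 9 * (s + 3) * (s + 4) * u ^ 5 / 1920)
      with (u ^ 3 * (1/4 - 9 * ((s + 3) * (s + 4)) * u ^ 2 / 1920)) by field.
    apply Rmult_lt_0_compat; [apply pow_lt; lra|].
    assert ((s + 3) * (s + 4) <= 16) by nra. nra. }
  assert (Hrising : 0 < s * (s + 1) * (s + 2)) by (repeat apply Rmult_lt_0_compat; lra).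
  assert (Hlo := sym_diff_ge_cubic s u ltac:(lra) ltac:(lra)).
  assert (Hhi := sym_diff_le_quintic s (u / 2) ltac:(lra) ltac:(lra)).
  assert (0 < s * (s + 1) * (s + 2) * (u ^ 3 / 4 - 9 * (s + 3) * (s + 4) * u ^ 5 / 1920))
    by (apply Rmult_lt_0_compat; assumption).
  assert (E : (2 * s * u + s * (s + 1) * (s + 2) * u ^ 3 / 3)
      - 2 * (2 * s * (u / 2) + s * (s + 1) * (s + 2) * (u / 2) ^ 3 / 3
             + 9 * s * (s + 1) * (s + 2) * (s + 3) * (s + 4) * (u / 2) ^ 5 / 120)
    = s * (s + 1) * (s + 2) * (u ^ 3 / 4 - 9 * (s + 3) * (s + 4) * u ^ 5 / 1920)) by field.
  lra.
Qed.

Lemma Rpower_perturb_le q s v : 0 < q -> 0 <= s -> 0 <= v ->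
  Rpower q (- s) * Rpower (1 + v / q ^ 2) (- (s / 2))
  <= Rpower q (- s) - s / 2 * v * Rpower q (- (s + 2))
     + s / 2 * (s / 2 + 1) / 2 * v ^ 2 * Rpower q (- (s + 4)).
Proof.
  intros Hq Hs Hv.
  assert (Hx : 0 <= v / q ^ 2)
    by (apply Rmult_le_pos; [lra | apply Rlt_le, Rinv_0_lt_compat, pow_lt; lra]).
  assert (H := Rpower_1_add_opp_le_quadratic (s / 2) (v / q ^ 2) ltac:(lra) Hx).
  apply Rmult_le_compat_l with (r := Rpower q (- s)) in H; [|apply Rlt_le, Rpower_pos].
  replace (s + 2) with (s + INR 2) by (simpl; ring).
  replace (s + 4) with (s + INR 4) by (simpl; ring).
  rewrite !Rpower_opp_add_INR by exact Hq.
  eapply Rle_trans; [exact H|]. right. field. lra.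
Qed.

Lemma Rpower_perturb_ge q s v : 0 < q -> 0 <= s -> 0 <= v ->
  Rpower q (- s) - s / 2 * v * Rpower q (- (s + 2))
  <= Rpower q (- s) * Rpower (1 + v / q ^ 2) (- (s / 2)).
Proof.
  intros Hq Hs Hv.
  assert (Hx : 0 <= v / q ^ 2)
    by (apply Rmult_le_pos; [lra | apply Rlt_le, Rinv_0_lt_compat, pow_lt; lra]).
  assert (H := Rpower_1_add_opp_ge_linear (s / 2) (v / q ^ 2) ltac:(lra) Hx).
  apply Rmult_le_compat_l with (r := Rpower q (- s)) in H; [|apply Rlt_le, Rpower_pos].
  replace (s + 2) with (s + INR 2) by (simpl; ring).
  rewrite Rpower_opp_add_INR by exact Hq.
  eapply Rle_trans; [|exact H]. right. field. lra.
Qed.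

Lemma perturbed_sym_diff_lt s u : 0 < s <= 2/5 -> 0 < u <= 2/7 ->
  Rpower (1 - u) (- s) * Rpower (1 + (u ^ 2 / 2) / (1 - u) ^ 2) (- (s / 2))
  - Rpower (1 + u) (- s) * Rpower (1 + (u ^ 2 / 2) / (1 + u) ^ 2) (- (s / 2))
  < 2 * sym_diff s (u / 2).
Proof.
  intros Hs Hu.
  assert (Hv : 0 <= u ^ 2 / 2) by nra.
  assert (Hm := Rpower_perturb_le (1 - u) s (u ^ 2 / 2) ltac:(lra) ltac:(lra) Hv).
  assert (Hp := Rpower_perturb_ge (1 + u) s (u ^ 2 / 2) ltac:(lra) ltac:(lra) Hv).
  assert (H8 : s / 2 * (s / 2 + 1) / 2 * (u ^ 2 / 2) ^ 2 * Rpower (1 - u) (- (s + 4))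
               <= s / 2 * (s / 2 + 1) / 2 * (u ^ 2 / 2) ^ 2 * 8).
  { apply Rmult_le_compat_l; [apply Rmult_le_pos; nra|].
    apply Rpower_1_sub_opp_le_8; lra. }
  assert (Hdiff := sym_diff_le_quintic s u ltac:(lra) ltac:(lra)).
  assert (Hdiff2 : s / 2 * (u ^ 2 / 2)
                   * (2 * (s + 2) * u + (s + 2) * (s + 2 + 1) * (s + 2 + 2) * u ^ 3 / 3)
                   <= s / 2 * (u ^ 2 / 2) * sym_diff (s + 2) u).
  { apply Rmult_le_compat_l; [nra|]. apply sym_diff_ge_cubic; lra. }
  assert (Hhalf := sym_diff_ge_cubic s (u / 2) ltac:(lra) ltac:(lra)).
  assert (Hpoly : 0 < s * u ^ 3 * ((s + 2) * ((1 - s) / 4 - u / 4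
                                  + (s + 3) * (s + 4) * u ^ 2 * (1 - 9 * s) / 120))).
  { apply Rmult_lt_0_compat; [apply Rmult_lt_0_compat; [lra | apply pow_lt; lra]|].
    apply Rmult_lt_0_compat; [lra|].
    assert (u ^ 2 <= 4/49) by nra.
    assert ((s + 3) * (s + 4) * u ^ 2 * (1 - 9 * s) / 120 >= - (4/49) * 40 / 120).
    { destruct (Rle_lt_dec 0 (1 - 9 * s)).
      - assert (0 <= (s + 3) * (s + 4) * (1 - 9 * s)) by (apply Rmult_le_pos; nra). nra.
      - assert ((s + 3) * (s + 4) * (1 - 9 * s) >= -40) by nra. nra. }
    lra. }
  assert (E : 2 * (2 * s * (u / 2) + s * (s + 1) * (s + 2) * (u / 2) ^ 3 / 3)
      - (2 * s * u + s * (s + 1) * (s + 2) * u ^ 3 / 3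
         + 9 * s * (s + 1) * (s + 2) * (s + 3) * (s + 4) * u ^ 5 / 120)
      + s / 2 * (u ^ 2 / 2) * (2 * (s + 2) * u + (s + 2) * (s + 2 + 1) * (s + 2 + 2) * u ^ 3 / 3)
      - s / 2 * (s / 2 + 1) / 2 * (u ^ 2 / 2) ^ 2 * 8
    = s * u ^ 3 * ((s + 2) * ((1 - s) / 4 - u / 4 + (s + 3) * (s + 4) * u ^ 2 * (1 - 9 * s) / 120)))
    by field.
  unfold sym_diff in *. lra.
Qed.

Lemma inv_Rpower_gap_lt s c : 0 < s <= 2/5 -> 7/2 <= c ->
  / Rpower (c - 1/2) s - / Rpower (c + 1/2) s < 1/2 * (/ Rpower (c - 1) s - / Rpower (c + 1) s).
Proof.
  intros Hs Hc. set (u := / c).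
  assert (Hu : 0 < u <= 2/7).
  { unfold u; split; [apply Rinv_0_lt_compat; lra|].
    replace (2/7) with (/ (7/2)) by field. apply Rinv_le_contravar; lra. }
  replace (c - 1/2) with (c * (1 - u / 2)) by (unfold u; field; lra).
  replace (c + 1/2) with (c * (1 + u / 2)) by (unfold u; field; lra).
  replace (c - 1) with (c * (1 - u)) by (unfold u; field; lra).
  replace (c + 1) with (c * (1 + u)) by (unfold u; field; lra).
  rewrite !Rinv_Rpower_mult by lra.
  assert (H := sym_diff_half_lt s u Hs Hu).
  apply Rmult_lt_compat_l with (r := / Rpower c s) in H;
    [|apply Rinv_0_lt_compat, Rpower_pos].
  unfold sym_diff in H. lra.
Qed.

Lemma inv_Rpower_gap_gt s c : 0 < s <= 2/5 -> 7/2 <= c ->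
  1/2 * (/ Rpower ((c - 1) ^ 2 + 1/2) (s / 2) - / Rpower ((c + 1) ^ 2 + 1/2) (s / 2))
  < / Rpower (c - 1/2) s - / Rpower (c + 1/2) s.
Proof.
  intros Hs Hc. set (u := / c).
  assert (Hu : 0 < u <= 2/7).
  { unfold u; split; [apply Rinv_0_lt_compat; lra|].
    replace (2/7) with (/ (7/2)) by field. apply Rinv_le_contravar; lra. }
  replace ((c - 1) ^ 2 + 1/2) with ((c * (1 - u)) ^ 2 * (1 + (u ^ 2 / 2) / (1 - u) ^ 2))
    by (unfold u; field; lra).
  replace ((c + 1) ^ 2 + 1/2) with ((c * (1 + u)) ^ 2 * (1 + (u ^ 2 / 2) / (1 + u) ^ 2))
    by (unfold u; field; lra).
  replace (c - 1/2) with (c * (1 - u / 2)) by (unfold u; field; lra).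
  replace (c + 1/2) with (c * (1 + u / 2)) by (unfold u; field; lra).
  assert (Hw : forall q, 0 < q -> 0 < 1 + (u ^ 2 / 2) / q ^ 2).
  { intros q Hq. assert (0 <= (u ^ 2 / 2) / q ^ 2); [|lra].
    apply Rmult_le_pos; [nra | apply Rlt_le, Rinv_0_lt_compat, pow_lt; lra]. }
  rewrite !(Rinv_Rpower_mult (_ ^ 2)), !Rpower_pow2_half, !Rinv_Rpower_mult
    by (try apply Hw; try apply pow_lt; nra).
  assert (H := perturbed_sym_diff_lt s u Hs Hu).
  apply Rmult_lt_compat_l with (r := / Rpower c s) in H;
    [|apply Rinv_0_lt_compat, Rpower_pos].
  unfold sym_diff in H. lra.
Qed.

Lemma series_lt_telescoping (a U : nat -> R) :
  (forall k, 0 <= a k) -> (forall k, a k < U k - U (S k)) -> (forall k, 0 <= U k) ->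
  ex_series a /\ Series a < U 0%nat.
Proof.
  intros Ha HaU HU.
  set (eps := U 0%nat - U 1%nat - a 0%nat).
  assert (Heps : 0 < eps) by (unfold eps; specialize (HaU 0%nat); lra).
  assert (Hsum : forall K, sum_n a K <= U 0%nat - U (S K) - eps).
  { induction K as [|K IH].
    - rewrite sum_O. unfold eps; lra.
    - rewrite sum_Sn. unfold plus; simpl. specialize (HaU (S K)). lra. }
  assert (Hbound : forall K, sum_n a K <= U 0%nat - eps)
    by (intros K; specialize (Hsum K); specialize (HU (S K)); lra).
  destruct (ex_finite_lim_seq_incr (sum_n a) (U 0%nat - eps)) as [l Hl]; [| exact Hbound |].
  { intros K. rewrite sum_Sn. unfold plus; simpl. specialize (Ha (S K)). lra. }
  split; [exists l; exact Hl|].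
  rewrite (is_series_unique a l Hl).
  assert (l <= U 0%nat - eps); [|lra].
  apply (is_lim_seq_le (sum_n a) (fun _ => U 0%nat - eps) l (U 0%nat - eps) Hbound Hl).
  apply is_lim_seq_const.
Qed.

Lemma telescoping_lt_series (a L : nat -> R) :
  ex_series a -> (forall k, L k - L (S k) < a k) -> is_lim_seq L 0 -> L 0%nat < Series a.
Proof.
  intros [l Hl] HaL HL.
  set (eps := a 0%nat - (L 0%nat - L 1%nat)).
  assert (Heps : 0 < eps) by (unfold eps; specialize (HaL 0%nat); lra).
  assert (Hsum : forall K, L 0%nat - L (S K) + eps <= sum_n a K).
  { induction K as [|K IH].
    - rewrite sum_O. unfold eps; lra.
    - rewrite sum_Sn. unfold plus; simpl. specialize (HaL (S K)). lra. }
  rewrite (is_series_unique a l Hl).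
  assert (L 0%nat - 0 + eps <= l); [|lra].
  apply (is_lim_seq_le (fun K => L 0%nat - L (S K) + eps) (sum_n a) (L 0%nat - 0 + eps) l Hsum);
    [|exact Hl].
  apply is_lim_seq_plus'; [|apply is_lim_seq_const].
  apply is_lim_seq_minus'; [apply is_lim_seq_const|].
  apply (is_lim_seq_incr_1 L 0), HL.
Qed.

Lemma is_lim_seq_inv_Rpower (x : nat -> R) s : 0 < s -> (forall k, INR k + 1 <= x k) ->
  is_lim_seq (fun k => / Rpower (x k) s) 0.
Proof.
  intros Hs Hx.
  replace (Finite 0) with (Rbar_inv p_infty) by reflexivity.
  apply is_lim_seq_inv; [|discriminate].
  apply is_lim_seq_spec. intros M.
  set (M' := Rmax 1 M).
  assert (HM' : 1 <= M' /\ M <= M') by (split; [apply Rmax_l | apply Rmax_r]).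
  destruct (INR_unbounded (Rpower M' (/ s))) as [N HN].
  exists N. intros k Hk. simpl.
  assert (INR N <= INR k) by (apply le_INR; exact Hk).
  assert (Hlt : Rpower (Rpower M' (/ s)) s < Rpower (x k) s).
  { apply Rlt_Rpower_l; [exact Hs|]. split; [apply Rpower_pos | specialize (Hx k); lra]. }
  rewrite Rpower_mult, Rinv_l, Rpower_1 in Hlt by lra.
  lra.
Qed.

Lemma A_ns_bounds s n : 0 < s <= 2/5 -> (3 <= n)%nat ->
  1/2 * / Rpower (INR n ^ 2 - INR n + 3/4) (s / 2) < A_ns n s
  /\ A_ns n s < 1/2 * / Rpower (INR n - 1/2) s.
Proof.
  intros Hs Hn.
  assert (Hn3 : 3 <= INR n) by (apply (le_INR 3) in Hn; simpl in Hn; lra).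
  set (c := fun k : nat => INR n + 2 * INR k + 1/2).
  assert (Hc : forall k, 7/2 <= c k) by (intros k; unfold c; pose proof (pos_INR k); lra).
  assert (HcS : forall k, c (S k) - 1 = c k + 1) by (intros k; unfold c; rewrite S_INR; ring).
  set (a := fun k => / Rpower (c k - 1/2) s - / Rpower (c k + 1/2) s).
  set (U := fun k => 1/2 * / Rpower (c k - 1) s).
  set (L := fun k => 1/2 * / Rpower ((c k - 1) ^ 2 + 1/2) (s / 2)).
  assert (HA : A_ns n s = Series a).
  { unfold A_ns, rpow. apply Series_ext. intros k. unfold a, c.
    rewrite !plus_INR, mult_INR.
    replace (INR n + 2 * INR k + 1/2 - 1/2) with (INR n + INR 2 * INR k) by (simpl INR; lra).
    replace (INR n + 2 * INR k + 1/2 + 1/2) with (INR n + INR 2 * INR k + INR 1)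
      by (simpl INR; lra).
    reflexivity. }
  assert (Ha : forall k, 0 <= a k).
  { intros k. unfold a. specialize (Hc k).
    assert (/ Rpower (c k + 1/2) s < / Rpower (c k - 1/2) s) by (apply Rinv_Rpower_lt; lra).
    lra. }
  assert (HaU : forall k, a k < U k - U (S k)).
  { intros k. unfold a, U. rewrite HcS. specialize (Hc k).
    assert (H := inv_Rpower_gap_lt s (c k) Hs Hc). lra. }
  assert (HaL : forall k, L k - L (S k) < a k).
  { intros k. unfold a, L. rewrite HcS. specialize (Hc k).
    assert (H := inv_Rpower_gap_gt s (c k) Hs Hc). lra. }
  assert (HU : forall k, 0 <= U k).
  { intros k. unfold U. apply Rmult_le_pos; [lra|]. apply Rlt_le, Rinv_0_lt_compat, Rpower_pos. }
  assert (HL : is_lim_seq L 0).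
  { replace (Finite 0) with (Rbar_mult (1/2) 0) by (simpl; f_equal; ring).
    apply is_lim_seq_scal_l, is_lim_seq_inv_Rpower; [lra|].
    intros k. unfold c. pose proof (pos_INR k). nra. }
  destruct (series_lt_telescoping a U Ha HaU HU) as [Hex Hup].
  assert (Hlo := telescoping_lt_series a L Hex HaL HL).
  unfold U, L, c in Hup, Hlo. simpl INR in Hup, Hlo.
  replace ((INR n + 2 * 0 + 1/2 - 1) ^ 2 + 1/2) with (INR n ^ 2 - INR n + 3/4) in Hlo by field.
  replace (INR n + 2 * 0 + 1/2 - 1) with (INR n - 1/2) in Hup by field.
  rewrite HA; split; assumption.
Qed.

Lemma A_ns_inv_bounds s n : 0 < s <= 2/5 -> (3 <= n)%nat ->
  2 * rpow (INR n - 1/2) s = 2 * rpow (INR n ^ 2 - INR n + 1/4) (s / 2) /\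
  2 * rpow (INR n ^ 2 - INR n + 1/4) (s / 2) < / A_ns n s /\
  / A_ns n s < 2 * rpow (INR n ^ 2 - INR n + 3/4) (s / 2).
Proof.
  intros Hs Hn.
  assert (Hn3 : 3 <= INR n) by (apply (le_INR 3) in Hn; simpl in Hn; lra).
  destruct (A_ns_bounds s n Hs Hn) as [Hlo Hup].
  unfold rpow.
  replace (INR n ^ 2 - INR n + 1/4) with ((INR n - 1/2) ^ 2) by field.
  rewrite Rpower_pow2_half by lra.
  set (P := Rpower (INR n - 1/2) s) in *.
  set (Q := Rpower (INR n ^ 2 - INR n + 3/4) (s / 2)) in *.
  assert (HP : 0 < P) by apply Rpower_pos.
  assert (HQ : 0 < Q) by apply Rpower_pos.
  assert (HQ' : 0 < 1/2 * / Q) by (apply Rmult_lt_0_compat; [lra | apply Rinv_0_lt_compat; lra]).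
  split; [reflexivity | split].
  - replace (2 * P) with (/ (1/2 * / P)) by (field; lra).
    apply Rinv_lt_contravar; [apply Rmult_lt_0_compat|]; lra.
  - replace (2 * Q) with (/ (1/2 * / Q)) by (field; lra).
    apply Rinv_lt_contravar; [apply Rmult_lt_0_compat|]; lra.
Qed.

Lemma B_ns_opp n s : B_ns n s = - A_ns n s.
Proof.
  unfold B_ns, A_ns. rewrite <- Series_opp. apply Series_ext. intros k. lra.
Qed.

Theorem lemma4p2 (p : nat) (hp5 : (5 <= p)%nat) (hpodd : Nat.odd p = true) :
  let s := 2 / INR p in
  (forall n : nat, (4 <= n)%nat -> Nat.even n = true ->
     2 * rpow (INR n - 1/2) s = 2 * rpow (INR n ^ 2 - INR n + 1/4) (s / 2) /\
     2 * rpow (INR n ^ 2 - INR n + 1/4) (s / 2) < / A_ns n s /\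
     / A_ns n s < 2 * rpow (INR n ^ 2 - INR n + 3/4) (s / 2)) /\
  (forall n : nat, (3 <= n)%nat -> Nat.odd n = true ->
     - 2 * rpow (INR n ^ 2 - INR n + 3/4) (s / 2) < / B_ns n s /\
     / B_ns n s < - 2 * rpow (INR n ^ 2 - INR n + 1/4) (s / 2) /\
     - 2 * rpow (INR n ^ 2 - INR n + 1/4) (s / 2) = - 2 * rpow (INR n - 1/2) s).
Proof.
  intros s.
  assert (Hs : 0 < s <= 2/5).
  { apply (le_INR 5) in hp5. simpl in hp5. unfold s. split.
    - apply Rdiv_lt_0_compat; lra.
    - apply Rmult_le_compat_l; [lra|]. apply Rinv_le_contravar; lra. }
  split.
  - intros n Hn _. apply A_ns_inv_bounds; [exact Hs | lia].
  - intros n Hn _. destruct (A_ns_inv_bounds s n Hs Hn) as [E [Hlo Hup]].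
    rewrite B_ns_opp, Rinv_opp. lra.
Qed.
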